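(* Let $L$ be an $R_0$-algebra and $k\in[0,1)$. If $\mu$ is an $(\in,\in\vee q_k)$-fuzzy fated filter of $L$, then for every $t\in(\tfrac{1-k}{2},1]$ the set $Q_k(\mu;t)=\{x\in L\mid \mu(x)+t+k>1\}$ is either empty or a fated filter of $L$.
   Context: An $R_0$-algebra is a bounded distributive lattice $(L,\wedge,\vee,0,1)$ with an order-reversing involution $\neg$ and a binary operation $\to$ such that for all $x,y,z\in L$: $x\to y=\neg y\to\neg x$; $1\to x=x$; $(y\to z)\wedge((x\to y)\to(x\to z))=y\to z$; $x\to(y\to z)=y\to(x\to z)$; $x\to(y\vee z)=(x\to y)\vee(x\to z)$; $(x\to y)\vee((x\to y)\to(\neg x\vee y))=1$. A fated filter of $L$ is a nonempty subset $A\subseteq L$ with $1\in A$ such that for all $x,y\in L$ and $a\in A$, $a\to((x\to y)\to x)\in A$ implies $x\in A$. For $x\in L$, $t\in(0,1]$ and a fuzzy subset $\mu:L\to[0,1]$: $x_t\in\mu$ iff $\mu(x)\ge t$; $x_t\,q_k\,\mu$ iff $\mu(x)+t+k>1$; $x_t\in\vee q_k\,\mu$ iff $x_t\in\mu$ or $x_t\,q_k\,\mu$. $\mu$ is an $(\in,\in\vee q_k)$-fuzzy fated filter of $L$ if (1) for all $x\in L$, $t\in(0,1]$: $x_t\in\mu\Rightarrow 1_t\in\vee q_k\,\mu$; and (2) for all $x,a,y\in L$, $t,s\in(0,1]$: if $(a\to((x\to y)\to x))_t\in\mu$ and $a_s\in\mu$ then $x_{\min\{t,s\}}\in\vee q_k\,\mu$.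 *)

From Stdlib Require Import Reals.
Open Scope R_scope.

Record R0_algebra := {
  car :> Type;
  meet : car -> car -> car;
  join : car -> car -> car;
  bot : car;
  top : car;
  neg : car -> car;
  imp : car -> car -> car;
  meetC : forall x y, meet x y = meet y x;
  joinC : forall x y, join x y = join y x;
  meetA : forall x y z, meet x (meet y z) = meet (meet x y) z;
  joinA : forall x y z, join x (join y z) = join (join x y) z;
  meet_absorb : forall x y, meet x (join x y) = x;
  join_absorb : forall x y, join x (meet x y) = x;
  meet_distr : forall x y z, meet x (join y z) = join (meet x y) (meet x z);
  join_bot : forall x, join x bot = x;
  meet_top : forall x, meet x top = x;
  (* neg is an order-reversing involution (x <= y iff meet x y = x) *)
  neg_invol : forall x, neg (neg x) = x;
  neg_antitone : forall x y, meet x y = x -> meet (neg y) (neg x) = neg y;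
  R1 : forall x y, imp x y = imp (neg y) (neg x);
  R2 : forall x, imp top x = x;
  R3 : forall x y z, meet (imp y z) (imp (imp x y) (imp x z)) = imp y z;
  R4 : forall x y z, imp x (imp y z) = imp y (imp x z);
  R5 : forall x y z, imp x (join y z) = join (imp x y) (imp x z);
  R6 : forall x y, join (imp x y) (imp (imp x y) (join (neg x) y)) = top
}.

Arguments imp {r}.
Arguments top {r}.

Definition fated_filter (L : R0_algebra) (A : L -> Prop) : Prop :=
  (exists z, A z) /\ A top /\
  forall x y a : L, A a -> A (imp a (imp (imp x y) x)) -> A x.

Definition fin (L : R0_algebra) (mu : L -> R) (x : L) (t : R) : Prop := mu x >= t.
Definition fq (k : R) (L : R0_algebra) (mu : L -> R) (x : L) (t : R) : Prop :=
  mu x + t + k > 1.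
Definition fin_or_q (k : R) (L : R0_algebra) (mu : L -> R) (x : L) (t : R) : Prop :=
  fin L mu x t \/ fq k L mu x t.

Definition fuzzy_subset (L : R0_algebra) (mu : L -> R) : Prop :=
  forall x, 0 <= mu x <= 1.

Definition in_inq_fuzzy_fated_filter (k : R) (L : R0_algebra) (mu : L -> R) : Prop :=
  fuzzy_subset L mu /\
  (forall (x : L) (t : R), 0 < t <= 1 -> fin L mu x t -> fin_or_q k L mu top t) /\
  (forall (x a y : L) (t s : R), 0 < t <= 1 -> 0 < s <= 1 ->
     fin L mu (imp a (imp (imp x y) x)) t -> fin L mu a s ->
     fin_or_q k L mu x (Rmin t s)).

Definition Qk (k : R) (L : R0_algebra) (mu : L -> R) (t : R) : L -> Prop :=
  fun x => fq k L mu x t.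

(* An (in, in \/ q_k)-fuzzy fated filter satisfies the "min" form of
   the fated-filter axioms, capped at (1-k)/2: mu 1 >= min (mu x, (1-k)/2) and
   mu x >= min (mu a, mu (a -> ((x -> y) -> x)), (1-k)/2).  Since t > (1-k)/2, the
   threshold 1 - t - k lies below the cap, so every level set of the form
   {x | mu x > 1 - t - k}, i.e. Q_k(mu; t), is closed under these two rules. *)
From Stdlib Require Import Reals.
From Stdlib Require Import Lra Classical.
Open Scope R_scope.

Section FuzzyFatedFilter.

Variables (L : R0_algebra) (k : R) (mu : L -> R).
Hypothesis k_ge0 : 0 <= k.

Lemma fin_or_q_le_half (u : L) (r : R) :
  r <= (1 - k) / 2 -> fin_or_q k L mu u r -> mu u >= r.
Proof. unfold fin_or_q, fin, fq; intros Hr [Hu | Hu]; lra. Qed.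

Hypothesis mu_ff : in_inq_fuzzy_fated_filter k L mu.

Lemma fuzzy_fated_filter_top (x : L) : mu top >= Rmin (mu x) ((1 - k) / 2).
Proof.
  destruct mu_ff as [Hmu [Htop _]].
  set (r := Rmin (mu x) ((1 - k) / 2)).
  assert (Hr_half : r <= (1 - k) / 2) by apply Rmin_r.
  destruct (Rle_lt_dec r 0) as [Hr0 | Hr0].
  - specialize (Hmu top); lra.
  - apply fin_or_q_le_half; [exact Hr_half |].
    apply (Htop x r); [lra |].
    unfold fin; apply Rle_ge, Rmin_l.
Qed.

Lemma fuzzy_fated_filter_mp (x y a : L) :
  mu x >= Rmin (Rmin (mu a) (mu (imp a (imp (imp x y) x)))) ((1 - k) / 2).
Proof.
  destruct mu_ff as [Hmu [_ Hmp]].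
  set (b := imp a (imp (imp x y) x)).
  set (r := Rmin (Rmin (mu a) (mu b)) ((1 - k) / 2)).
  assert (Hr_half : r <= (1 - k) / 2) by apply Rmin_r.
  assert (Hr_ab : r <= Rmin (mu a) (mu b)) by apply Rmin_l.
  assert (Hab_a : Rmin (mu a) (mu b) <= mu a) by apply Rmin_l.
  assert (Hab_b : Rmin (mu a) (mu b) <= mu b) by apply Rmin_r.
  destruct (Rle_lt_dec r 0) as [Hr0 | Hr0].
  - specialize (Hmu x); lra.
  - apply fin_or_q_le_half; [exact Hr_half |].
    rewrite <- (Rmin_left r r) by lra.
    apply (Hmp x a y r r); unfold fin; fold b; lra.
Qed.

End FuzzyFatedFilter.

Lemma fq_of_ge_min_half (k t m : R) (L : R0_algebra) (mu : L -> R) (u : L) :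
  (1 - k) / 2 < t -> m + t + k > 1 -> mu u >= Rmin m ((1 - k) / 2) ->
  fq k L mu u t.
Proof.
  unfold fq; intros Ht Hm.
  apply Rmin_case with (P := fun r => mu u >= r -> mu u + t + k > 1); lra.
Qed.

Lemma fq_Rmin (k t : R) (L : R0_algebra) (mu : L -> R) (a b : L) :
  fq k L mu a t -> fq k L mu b t -> Rmin (mu a) (mu b) + t + k > 1.
Proof.
  unfold fq; intros Ha Hb.
  apply Rmin_case with (P := fun r => r + t + k > 1); assumption.
Qed.

Theorem theorem3p20 (L : R0_algebra) (k : R) (mu : L -> R) :
  0 <= k < 1 ->
  in_inq_fuzzy_fated_filter k L mu ->
  forall t : R, (1 - k) / 2 < t <= 1 ->
    (forall x : L, ~ Qk k L mu t x) \/ fated_filter L (Qk k L mu t).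
Proof.
  intros [Hk _] Hmu t [Ht _].
  destruct (classic (exists z, Qk k L mu t z)) as [[z Hz] | Hempty].
  2: { left; intros x Hx; apply Hempty; exists x; exact Hx. }
  right; split; [exists z; exact Hz | split].
  - apply (fq_of_ge_min_half k t (mu z)); [exact Ht | exact Hz |].
    exact (fuzzy_fated_filter_top L k mu Hk Hmu z).
  - intros x y a Ha Hb.
    apply (fq_of_ge_min_half k t (Rmin (mu a) (mu (imp a (imp (imp x y) x)))));
      [exact Ht | exact (fq_Rmin k t L mu _ _ Ha Hb) |].
    exact (fuzzy_fated_filter_mp L k mu Hk Hmu x y a).
Qed.
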